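(* Let $K^2$ be the Klein bottle and $\mathcal X(K^2)=\mathrm{Hom}(\pi_1(K^2),\mathrm{SL}_2(\mathbb C))/\!/\mathrm{SL}_2(\mathbb C)$ its $\mathrm{SL}_2(\mathbb C)$-character variety. Then $\mathcal X(K^2)$ has three irreducible components. Exactly one of them contains characters of irreducible representations, and this component has dimension 1. *)

From HB Require Import structures.
From mathcomp Require Import all_boot all_order all_algebra.
From mathcomp Require Import Rstruct complex.
From mathcomp Require Import mpoly.
Set Implicit Arguments. Unset Strict Implicit. Unset Printing Implicit Defensive.
Import Order.TTheory GRing.Theory Num.Theory.
Local Open Scope ring_scope.

Definition C : Type := complex Rdefinitions.R.
HB.instance Definition _ := GRing.Field.on C.

Definition pt := 'I_3 -> C.
Definition cset := pt -> Prop.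
Definition csubset (S T : cset) : Prop := forall x, S x -> T x.
Definition csame (S T : cset) : Prop := csubset S T /\ csubset T S.

Definition zero_locus (P : {mpoly C[3]} -> Prop) : cset :=
  fun x => forall p, P p -> p.@[x] = 0.
Definition zclosed (S : cset) : Prop := exists P, csame S (zero_locus P).

Definition zirreducible (S : cset) : Prop :=
  [/\ zclosed S, exists x, S x &
      forall S1 S2, zclosed S1 -> zclosed S2 ->
        csubset S (fun x => S1 x \/ S2 x) -> csubset S S1 \/ csubset S S2].

Definition irr_component (X Z : cset) : Prop :=
  [/\ zirreducible Z, csubset Z X &
      forall W, zirreducible W -> csubset Z W -> csubset W X -> csubset W Z].

Definition irr_chain (Z : cset) (f : nat -> cset) (n : nat) : Prop :=
  (forall i, (i <= n)%N -> zirreducible (f i) /\ csubset (f i) Z) /\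
  (forall i, (i < n)%N -> csubset (f i) (f i.+1) /\ ~ csubset (f i.+1) (f i)).

Definition zdim_eq (Z : cset) (n : nat) : Prop :=
  (exists f, irr_chain Z f n) /\ ~ (exists f, irr_chain Z f n.+1).

(** SL_2(C) and representations of pi_1(K^2) = < a, b | a b a^-1 b = 1 >,
    given by the images (A, B) of the generators. *)
Definition SL2 (A : 'M[C]_2) : Prop := \det A = 1.
Definition klein_rep (A B : 'M[C]_2) : Prop :=
  [/\ SL2 A, SL2 B & A *m B *m invmx A *m B = 1%:M].

Definition irreducible_rep (A B : 'M[C]_2) : Prop :=
  ~ exists v : 'cV[C]_2, v != 0 /\
      exists l m : C, A *m v = l *: v /\ B *m v = m *: v.

(** The character of (A,B), in the trace coordinates
    (tr rho(a), tr rho(b), tr rho(ab)) of the character variety of the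
    free group F_2 = C^3. *)
Definition char_pt (A B : 'M[C]_2) : pt :=
  fun i => match val i with
           | 0 => \tr A
           | 1 => \tr B
           | _ => \tr (A *m B)
           end.

(** The SL_2(C)-character variety of the Klein bottle, as the (closed)
    image of Hom(pi_1(K^2), SL_2(C)) in C^3. *)
Definition XK : cset :=
  fun x => exists A B, klein_rep A B /\ forall i, x i = char_pt A B i.

Definition contains_irr_char (Z : cset) : Prop :=
  exists A B, [/\ klein_rep A B, irreducible_rep A B & Z (char_pt A B)].

(* The relation b a b = a and Cayley-Hamilton for b give
   2 tr(ab) = tr a tr b and tr b tr(ab) = 2 tr a, hence tr a (tr b^2 - 4) = 0:
   in the coordinates (tr a, tr b, tr ab) the character variety lies in the
   union of the line tr a = tr ab = 0 and the lines tr b = 2e, tr ab = e tr a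
   (e = 1, -1), and explicit representations show that it is this union.
   A line is an irreducible closed set of dimension 1, because a nonzero
   polynomial restricted to it has finitely many roots; as none of the three
   lines contains another, they are the irreducible components.  When
   tr b = 2e, b - e is nilpotent and anticommutes with a, so a and b have a
   common eigenvector; the line tr a = 0 carries an irreducible character. *)

From HB Require Import structures.
From mathcomp Require Import all_boot all_order all_algebra.
From mathcomp Require Import Rstruct complex.
From mathcomp Require Import mpoly.
From mathcomp Require Import ring.
From Stdlib Require Import Classical FunctionalExtensionality.
Set Implicit Arguments. Unset Strict Implicit. Unset Printing Implicit Defensive.
Import Order.TTheory GRing.Theory Num.Theory.
Local Open Scope ring_scope.

HB.instance Definition _ := Num.ClosedField.on C.

Lemma ord2P (P : 'I_2 -> Prop) : P 0 -> P 1 -> forall i, P i.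
Proof.
move=> P0 P1 [[|[|//]] lti].
- by rewrite (_ : Ordinal lti = 0) //; apply: val_inj.
- by rewrite (_ : Ordinal lti = 1) //; apply: val_inj.
Qed.

Lemma ord3P (P : 'I_3 -> Prop) : P 0 -> P 1 -> P 2 -> forall i, P i.
Proof.
move=> P0 P1 P2 [[|[|[|//]]] lti].
- by rewrite (_ : Ordinal lti = 0) //; apply: val_inj.
- by rewrite (_ : Ordinal lti = 1) //; apply: val_inj.
- by rewrite (_ : Ordinal lti = 2) //; apply: val_inj.
Qed.

Section TwoByTwo.
Variable R : comPzRingType.
Implicit Types A B : 'M[R]_2.

Lemma matrix2P A B :
  A 0 0 = B 0 0 -> A 0 1 = B 0 1 -> A 1 0 = B 1 0 -> A 1 1 = B 1 1 -> A = B.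
Proof. by move=> *; apply/matrixP; do 2 apply: ord2P. Qed.

Lemma sum_ord2 (F : 'I_2 -> R) : \sum_i F i = F 0 + F 1.
Proof. by rewrite big_ord_recl big_ord1; congr (_ + F _); apply: val_inj. Qed.

Lemma det_mx2 A : \det A = A 0 0 * A 1 1 - A 0 1 * A 1 0.
Proof.
rewrite (expand_det_row _ 0) sum_ord2 /cofactor !det_mx11 !mxE /=.
have l01 : lift (0 : 'I_2) (0 : 'I_1) = 1 by apply: val_inj.
have l10 : lift (1 : 'I_2) (0 : 'I_1) = 0 by apply: val_inj.
rewrite !l01 l10 /=; ring.
Qed.

Lemma mxtrace2 A : \tr A = A 0 0 + A 1 1.
Proof. exact: sum_ord2. Qed.

Lemma mulmx2E n A (B : 'M[R]_(2, n)) i j :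
  (A *m B) i j = A i 0 * B 0 j + A i 1 * B 1 j.
Proof. by rewrite mxE sum_ord2. Qed.

Lemma Cayley_Hamilton2 A : A *m A = \tr A *: A - \det A *: 1%:M.
Proof. by apply: matrix2P; rewrite mulmx2E !mxE det_mx2 mxtrace2 /=; ring. Qed.

Definition mx22 (a b c d : R) : 'M[R]_2 :=
  \matrix_(i, j) if i == 0 then (if j == 0 then a else b) else (if j == 0 then c else d).

End TwoByTwo.

Lemma mx_eigenvector (F : closedFieldType) n (A : 'M[F]_n.+1) :
  exists l, exists2 v : 'cV[F]_n.+1, v != 0 & A *m v = l *: v.
Proof.
have [l] : exists l, root (char_poly A^T) l by apply/closed_rootP; rewrite size_char_poly.
rewrite -eigenvalue_root_char => /eigenvalueP[u uA nz_u].
by exists l, u^T; rewrite ?trmx_eq0 // -[A]trmxK -trmx_mul uA linearZ.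
Qed.

Lemma klein_relE (R : comUnitRingType) n (A B : 'M[R]_n) : \det A = 1 ->
  A *m B *m invmx A *m B = 1%:M <-> B *m A *m B = A.
Proof.
move=> detA; have uA : A \in unitmx by rewrite unitmxE detA unitr1.
split => [/mulmx1C | BAB]; last by apply: mulmx1C; rewrite !mulmxA BAB mulmxV.
by rewrite !mulmxA => BAB1; rewrite -[RHS]mul1mx -BAB1 -!mulmxA mulVmx ?mulmx1.
Qed.

Section KleinRelation.
Variables (R : comPzRingType) (A B : 'M[R]_2).
Hypotheses (detB : \det B = 1) (BAB : B *m A *m B = A).

Let BB : B *m B = \tr B *: B - 1%:M.
Proof. by rewrite Cayley_Hamilton2 detB scale1r. Qed.

Lemma klein_trace_mul : 2 * \tr (A *m B) = \tr A * \tr B.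
Proof.
have : \tr (B *m (B *m A *m B)) = \tr (B *m A) by rewrite BAB.
rewrite !mulmxA BB -mulmxA mulmxBl mul1mx -scalemxAl mulmxA BAB raddfB /=.
rewrite mxtraceZ (mxtrace_mulC B A) mulr_natl mulr2n => {2}<-; ring.
Qed.

Lemma klein_trace_mul_r : \tr B * \tr (A *m B) = 2 * \tr A.
Proof.
have : \tr (B *m A *m B) = \tr A by rewrite BAB.
rewrite mxtrace_mulC mulmxA BB mulmxBl mul1mx -scalemxAl raddfB /= mxtraceZ.
rewrite (mxtrace_mulC B A) mulr_natl mulr2n => {2}<-; ring.
Qed.

End KleinRelation.

Lemma klein_common_eigenvector (F : closedFieldType) (A B : 'M[F]_2) (mu : F) :
  \det B = 1 -> B *m A *m B = A -> \tr B = 2 * mu -> mu * mu = 1 ->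
  exists v : 'cV[F]_2, v != 0 /\
    exists l m : F, A *m v = l *: v /\ B *m v = m *: v.
Proof.
move=> detB BAB trB mu2.
(* [N] squares to 0 and anticommutes with [A], so it maps an eigenvector of
   [A] either to 0 or to an eigenvector of [A] in [ker N]. *)
pose N := B - mu%:M.
have BB : B *m B = 2 * mu *: B - 1%:M by rewrite Cayley_Hamilton2 detB trB scale1r.
have NN : N *m N = 0.
  rewrite mulmxBl !mulmxBr BB mul_mx_scalar mul_scalar_mx -scalar_mxM mu2.
  by apply/matrixP => i j; rewrite !mxE; ring.
have AB : A *m B = 2 * mu *: A - B *m A.
  by rewrite -{1}BAB -mulmxA BB mulmxBr mulmx1 -scalemxAr BAB.
have AN : A *m N = - (N *m A).
  rewrite mulmxBr mulmxBl AB mul_mx_scalar mul_scalar_mx.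
  by apply/matrixP => i j; rewrite !mxE; ring.
have [l [w nz_w Aw]] := mx_eigenvector A.
have [Nw0 | nz_Nw] := eqVneq (N *m w) 0.
- exists w; split => //; exists l, mu; split => //.
  by rewrite -[B](subrK mu%:M) mulmxDl Nw0 add0r mul_scalar_mx.
- exists (N *m w); split => //; exists (- l), mu; split.
  + by rewrite mulmxA AN mulNmx -mulmxA Aw -scalemxAr scaleNr.
  + by rewrite -[B](subrK mu%:M) mulmxDl mulmxA NN mul0mx add0r mul_scalar_mx.
Qed.

Lemma meval_line (R : comNzRingType) n (p : {mpoly R[n]}) (u w : 'I_n -> R) :
  exists q : {poly R}, forall t, p.@[fun i => u i + t * w i] = q.[t].
Proof.
elim/mpolyind: p => [|c m p _ _ [q pq]]; first by exists 0 => t; rewrite meval0 horner0.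
exists (c *: \prod_(i < n) ((u i)%:P + w i *: 'X) ^+ m i + q) => t.
rewrite mevalD mevalZ mevalX pq hornerD hornerZ horner_prod; congr (_ * _ + _).
apply: eq_bigr => i _; rewrite horner_exp hornerD hornerC hornerZ hornerX.
by rewrite mulrC.
Qed.

Lemma not_csubsetP (S T : cset) : ~ csubset S T -> exists x, S x /\ ~ T x.
Proof.
move=> nST; apply: NNPP => nx; apply: nST => x Sx.
by apply: NNPP => nTx; apply: nx; exists x.
Qed.

Lemma zero_locusPn P x : ~ zero_locus P x -> exists2 p, P p & p.@[x] != 0.
Proof.
move=> nPx; apply: NNPP => np; apply: nPx => p Pp.
by apply: NNPP => px; apply: np; exists p => //; apply/eqP.
Qed.

Lemma zclosedU S1 S2 : zclosed S1 -> zclosed S2 -> zclosed (fun x => S1 x \/ S2 x).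
Proof.
move=> [P1 [S1P1 P1S1]] [P2 [S2P2 P2S2]].
exists (fun r => exists p q, [/\ P1 p, P2 q & r = p * q]); split.
- move=> x [/S1P1 | /S2P2] Px _ [p [q [P1p P2q ->]]]; rewrite mevalM.
  + by rewrite Px ?mul0r.
  + by rewrite (Px q) ?mulr0.
- move=> x Px; have [/P1S1 | /zero_locusPn [p P1p px]] := classic (zero_locus P1 x).
    by left.
  right; apply: P2S2 => q P2q; apply/eqP.
  have /eqP := Px (p * q) (ex_intro _ p (ex_intro _ q (And3 P1p P2q erefl))).
  by rewrite mevalM mulf_eq0 (negbTE px).
Qed.

Lemma zclosed0 : zclosed (fun _ => False).
Proof.
exists (fun p => p = 1); split => // x /(_ 1 erefl) /eqP.
by rewrite meval1 oner_eq0.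
Qed.

Lemma zclosed_bigcup (I : eqType) (s : seq I) (S : I -> cset) :
  (forall i, zclosed (S i)) -> zclosed (fun x => exists2 i, i \in s & S i x).
Proof.
move=> S_closed; elim: s => [|i s IHs].
  by case: zclosed0 => P [P0 P0']; exists P; split => x; [case | move/P0'].
case: (zclosedU (S_closed i) IHs) => P [SP PS]; exists P; split => x.
- move=> [j]; rewrite inE => /orP[/eqP-> | js] Sjx; apply: SP; first by left.
  by right; exists j.
- move/PS => [Six | [j js Sjx]]; first by exists i; rewrite ?mem_head.
  by exists j; rewrite // inE js orbT.
Qed.

Definition cset1 (a : pt) : cset := fun x => x = a.

Lemma zclosed_cset1 a : zclosed (cset1 a).
Proof.
exists (fun p => exists i, p = 'X_i - (a i)%:MP); split.
- by move=> x -> p [i ->]; rewrite mevalB mevalXU mevalC subrr.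
- move=> x xa; apply: functional_extensionality => i; apply/eqP.
  by rewrite -subr_eq0 -(xa _ (ex_intro _ i erefl)) mevalB mevalXU mevalC.
Qed.

Lemma zirreducible_cset1 a : zirreducible (cset1 a).
Proof.
split; [exact: zclosed_cset1 | by exists a |].
by move=> S1 S2 _ _ /(_ a erefl) [] Sa; [left | right] => x ->.
Qed.

Lemma zirreducible_sub_bigcup (I : eqType) (s : seq I) (S : I -> cset) W :
  zirreducible W -> (forall i, zclosed (S i)) ->
  csubset W (fun x => exists2 i, i \in s & S i x) ->
  exists2 i, i \in s & csubset W (S i).
Proof.
move=> [_ [w Ww] Wirr] S_closed; elim: s => [|i s IHs] Ws; first by have [] := Ws w Ww.
have WSs : csubset W (fun x => S i x \/ exists2 j, j \in s & S j x).
  by move=> x /Ws [j]; rewrite inE => /orP[/eqP-> | js] Sjx; [left | right; exists j].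
case: (Wirr _ _ (S_closed i) (zclosed_bigcup s S_closed) WSs) => [WSi | /IHs [j js WSj]].
  by exists i; rewrite ?mem_head.
by exists j; rewrite // inE js orbT.
Qed.

Definition line_at (u w : pt) (t : C) : pt := fun i => u i + t * w i.
Definition line (u w : pt) : cset := fun x => exists t, x = line_at u w t.

Lemma lineP u w i x : w i != 0 ->
  line u w x <-> forall j, w i * (x j - u j) = w j * (x i - u i).
Proof.
move=> wi; split => [[t ->] j | xeq]; first by rewrite /line_at; ring.
exists ((x i - u i) / w i); apply: functional_extensionality => j.
apply: (mulfI wi); rewrite /line_at mulrDr -[x j](subrK (u j)) mulrDr xeq.
by field.
Qed.

Section Line.
Variables (u w : pt) (i : 'I_3).
Hypothesis wi : w i != 0.

Lemma zclosed_line : zclosed (line u w).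
Proof.
exists (fun p => exists j,
  p = (w i)%:MP * ('X_j - (u j)%:MP) - (w j)%:MP * ('X_i - (u i)%:MP)).
split => x.
- move=> /(lineP _ _ wi) xeq _ [j ->].
  by rewrite !(mevalB, mevalM, mevalC, mevalXU) xeq subrr.
- move=> xP; apply/(lineP _ _ wi) => j; apply/eqP; rewrite -subr_eq0.
  by have := xP _ (ex_intro _ j erefl); rewrite !(mevalB, mevalM, mevalC, mevalXU) => ->.
Qed.

Lemma zirreducible_line : zirreducible (line u w).
Proof.
split; [exact: zclosed_line | by exists (line_at u w 0), 0 |].
move=> S1 S2 [P1 [S1P1 P1S1]] [P2 [S2P2 P2S2]] LS12.
apply: NNPP => /not_or_and[/not_csubsetP[_ [[t1 ->] nS1]]].
move=> /not_csubsetP[_ [[t2 ->] nS2]].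
have [p1 P1p1 p1x1] : exists2 p, P1 p & p.@[line_at u w t1] != 0.
  by apply: zero_locusPn => /P1S1.
have [p2 P2p2 p2x2] : exists2 p, P2 p & p.@[line_at u w t2] != 0.
  by apply: zero_locusPn => /P2S2.
have [q1 p1q1] := meval_line p1 u w; have [q2 p2q2] := meval_line p2 u w.
rewrite [p1.@[_]]p1q1 in p1x1; rewrite [p2.@[_]]p2q2 in p2x2.
have nz_q12 : q1 * q2 != 0.
  by apply: mulf_neq0; [apply: contraNneq p1x1 | apply: contraNneq p2x2] => ->; rewrite horner0.
have [t] := closed_nonrootP _ nz_q12.
rewrite rootM negb_or /root -p1q1 -p2q2 => /andP[p1t p2t].
by case: (LS12 (line_at u w t) (ex_intro _ t erefl)) => [/S1P1 | /S2P2] Pt;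
  [move: p1t | move: p2t]; rewrite Pt ?eqxx.
Qed.

Lemma line_at_inj : injective (line_at u w).
Proof.
move=> s t /(congr1 (fun x : pt => x i)) /addrI /eqP.
by rewrite -subr_eq0 -mulrBl mulf_eq0 (negbTE wi) orbF subr_eq0 => /eqP.
Qed.

End Line.

Lemma zirreducible_proper_sub_line u w W :
  zirreducible W -> csubset W (line u w) -> ~ csubset (line u w) W ->
  forall a b, W a -> W b -> a = b.
Proof.
move=> irrW WL /not_csubsetP [_ [[tz ->] nWz]].
(* An equation of [W] that does not vanish on the line has finitely many
   roots along it, so [W] is covered by finitely many points. *)
have [[P [WP PW]] _ _] := irrW.
have [p Pp pz] : exists2 p, P p & p.@[line_at u w tz] != 0.
  by apply: zero_locusPn => /PW.
have [q pq] := meval_line p u w; rewrite [p.@[_]]pq in pz.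
have nz_q : q != 0 by apply: contraNneq pz => ->; rewrite horner0.
have [rs q_roots] := closed_field_poly_normal q.
have W_roots : csubset W (fun x => exists2 r, r \in rs & cset1 (line_at u w r) x).
  move=> x Wx; have [t xt] := WL x Wx; exists t => //.
  have := WP x Wx p Pp; rewrite xt [p.@[_]]pq => /rootP.
  by rewrite q_roots rootZ ?lead_coef_eq0 // root_prod_XsubC.
have [r _ Wr] := zirreducible_sub_bigcup irrW (fun r => zclosed_cset1 _) W_roots.
by move=> a b /Wr-> /Wr->.
Qed.

Lemma zdim_line u w i : w i != 0 -> zdim_eq (line u w) 1.
Proof.
move=> wi; split.
- exists (fun n => if n is 0 then cset1 (line_at u w 0) else line u w); split.
  + case=> [|[|//]] _ /=.
    * by split; [exact: zirreducible_cset1 | move=> x ->; exists 0].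
    * by split; [exact: zirreducible_line wi |].
  + case=> [|//] _ /=; split; first by move=> x ->; exists 0.
    move=> /(_ (line_at u w 1) (ex_intro _ 1 erefl)) /(line_at_inj wi) /eqP.
    by rewrite oner_eq0.
- case=> f [f_irr f_lt].
  have [irr0 _] := f_irr 0%N isT; have [irr1 f1L] := f_irr 1%N isT.
  have [_ f2L] := f_irr 2%N isT.
  have [f01 /not_csubsetP [v [f1v nf0v]]] := f_lt 0%N isT.
  have [_ nf21] := f_lt 1%N isT.
  have nLf1 : ~ csubset (line u w) (f 1) by move=> Lf1; apply: nf21 => x /f2L /Lf1.
  have [_ [a f0a] _] := irr0.
  by apply: nf0v; rewrite (zirreducible_proper_sub_line irr1 f1L nLf1 f1v (f01 a f0a)).
Qed.

Lemma zirreducible_closed S : zirreducible S -> zclosed S.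
Proof. by case. Qed.

Section IrreducibleCover.
Variables (X : cset) (I : finType) (S : I -> cset).
Hypotheses (S_irr : forall i, zirreducible (S i)) (XS : forall x, X x <-> exists i, S i x).
Hypothesis S_incomparable : forall i j, csubset (S i) (S j) -> i = j.

Lemma zirreducible_sub_cover W : zirreducible W -> csubset W X -> exists i, csubset W (S i).
Proof.
move=> irrW WX; have S_closed i := zirreducible_closed (S_irr i).
have [|i _ WSi] := zirreducible_sub_bigcup (s := enum I) irrW S_closed; last by exists i.
by move=> x /WX /XS [i Six]; exists i; rewrite ?mem_enum.
Qed.

Lemma irr_component_cover i : irr_component X (S i).
Proof.
split => // [x Six | W irrW SiW WX]; first by apply/XS; exists i.
have [j WSj] := zirreducible_sub_cover irrW WX.
by rewrite (S_incomparable (fun x Six => WSj x (SiW x Six))).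
Qed.

Lemma irr_component_coverP Z : irr_component X Z -> exists i, csame Z (S i).
Proof.
case=> irrZ ZX Zmax; have [i ZSi] := zirreducible_sub_cover irrZ ZX.
by exists i; split => //; apply: Zmax => // x Six; apply/XS; exists i.
Qed.

End IrreducibleCover.

Lemma klein_repP A B : klein_rep A B <-> [/\ SL2 A, SL2 B & B *m A *m B = A].
Proof.
by split=> -[detA detB rel]; split=> //; apply/(klein_relE B detA).
Qed.

Definition pt3 (a b c : C) : pt :=
  fun i => match val i with 0 => a | 1 => b | _ => c end.

Lemma pt3_inj a b c a' b' c' :
  pt3 a b c = pt3 a' b' c' -> [/\ a = a', b = b' & c = c'].
Proof.
move=> e; split.
- exact: (congr1 (@^~ 0) e).
- exact: (congr1 (@^~ 1) e).
- exact: (congr1 (@^~ 2) e).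
Qed.

Lemma line_at_pt3 a b c a' b' c' t :
  line_at (pt3 a b c) (pt3 a' b' c') t = pt3 (a + t * a') (b + t * b') (c + t * c').
Proof. by apply: functional_extensionality => -[[|[|[|//]]] lti]. Qed.

Lemma char_ptE A B : char_pt A B = pt3 (\tr A) (\tr B) (\tr (A *m B)).
Proof. by []. Qed.

Definition trA0_line : cset := line (pt3 0 0 0) (pt3 0 1 0).
Definition trB_line (e : C) : cset := line (pt3 0 (2 * e) 0) (pt3 1 0 e).

Lemma trA0_lineE a b c : trA0_line (pt3 a b c) <-> a = 0 /\ c = 0.
Proof.
split=> [[t] | [-> ->]]; last by exists b; rewrite line_at_pt3; congr pt3; ring.
by rewrite line_at_pt3 => /pt3_inj[-> _ ->]; split; ring.
Qed.

Lemma trB_lineE e a b c : trB_line e (pt3 a b c) <-> b = 2 * e /\ c = e * a.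
Proof.
split=> [[t] | [-> ->]]; last by exists a; rewrite line_at_pt3; congr pt3; ring.
by rewrite line_at_pt3 => /pt3_inj[-> -> ->]; split; ring.
Qed.

Lemma two_neq0 : (2 : C) != 0.
Proof. by rewrite pnatr_eq0. Qed.

Lemma klein_char_lines A B : klein_rep A B ->
  [\/ trA0_line (char_pt A B), trB_line 1 (char_pt A B) | trB_line (-1) (char_pt A B)].
Proof.
case/klein_repP => _ detB BAB; have trAB := klein_trace_mul detB BAB.
have : \tr A * ((\tr B - 2) * (\tr B + 2)) = 0.
  transitivity (\tr B * (\tr A * \tr B) - 2 * (2 * \tr A)); first by ring.
  by rewrite -trAB -(klein_trace_mul_r detB BAB); ring.
rewrite char_ptE => /eqP.
rewrite !mulf_eq0 subr_eq0 addr_eq0 => /orP[/eqP trA0 | /orP[/eqP trB2 | /eqP trBm2]].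
- by constructor 1; apply/trA0_lineE; split => //; apply: (mulfI two_neq0); rewrite trAB trA0; ring.
- constructor 2; apply/trB_lineE; split; first by rewrite trB2; ring.
  by apply: (mulfI two_neq0); rewrite trAB trB2; ring.
- constructor 3; apply/trB_lineE; split; first by rewrite trBm2; ring.
  by apply: (mulfI two_neq0); rewrite trAB trBm2; ring.
Qed.

Lemma XK_char A B : klein_rep A B -> XK (char_pt A B).
Proof. by exists A, B. Qed.

Definition trA0_rep (t : C) : 'M[C]_2 * 'M[C]_2 :=
  (mx22 'i 0 ('i * t) (- 'i), mx22 t (-1) 1 0).

Lemma trA0_rep_klein t : klein_rep (trA0_rep t).1 (trA0_rep t).2.
Proof.
apply/klein_repP; rewrite /SL2 !det_mx2 !mxE /=; split.
- by rewrite mulrN -expr2 sqr_i; ring.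
- by ring.
- by apply: matrix2P; rewrite !mulmx2E !mxE /=; ring.
Qed.

Lemma trA0_rep_char t : char_pt (trA0_rep t).1 (trA0_rep t).2 = pt3 0 t 0.
Proof. by rewrite char_ptE !mxtrace2 !mulmx2E !mxE /=; congr pt3; ring. Qed.

Lemma trA0_line_sub_XK : csubset trA0_line XK.
Proof.
move=> _ [t ->]; rewrite line_at_pt3 (_ : pt3 _ _ _ = pt3 0 t 0); last by congr pt3; ring.
by rewrite -trA0_rep_char; apply: XK_char; apply: trA0_rep_klein.
Qed.

Lemma trB_line_sub_XK e : e * e = 1 -> csubset (trB_line e) XK.
Proof.
move=> e2 _ [t ->]; rewrite line_at_pt3.
have -> : pt3 (0 + t * 1) (2 * e + t * 0) (0 + t * e) = char_pt (mx22 t (-1) 1 0) e%:M.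
  by rewrite char_ptE mul_mx_scalar mxtraceZ !mxtrace2 !mxE /=; congr pt3; ring.
apply: XK_char; apply/klein_repP; rewrite /SL2 det_mx2 det_scalar !mxE /=.
split; [ring | by rewrite expr2 |].
by rewrite mul_scalar_mx -scalemxAl mul_mx_scalar scalerA e2 scale1r.
Qed.

Lemma i_neq0 : ('i : C) != 0.
Proof.
apply/eqP => i0; have := sqr_i Rdefinitions.R; rewrite -[X in X ^+ 2]/('i : C) i0 expr0n /=.
by move/eqP; rewrite eq_sym oppr_eq0 oner_eq0.
Qed.

Lemma trA0_rep0_irreducible : irreducible_rep (trA0_rep 0).1 (trA0_rep 0).2.
Proof.
case=> v [nz_v [l [m [/matrixP Av /matrixP Bv]]]].
have := Av 0 0; have := Av 1 0; have := Bv 0 0; have := Bv 1 0.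
rewrite !mulmx2E !mxE /= => Bv1 Bv0 Av1 Av0.
have /eqP : v 0 0 * v 1 0 * (2 * 'i) = 0.
  transitivity (l * v 0 0 * v 1 0 - v 0 0 * (l * v 1 0)); last by ring.
  by rewrite -Av0 -Av1; ring.
rewrite !mulf_eq0 (negbTE two_neq0) (negbTE i_neq0) !orbF.
have v_neq0 : v 0 0 = 0 -> v 1 0 = 0 -> False.
  move=> v00 v10; move/negP: nz_v; apply; apply/eqP/matrixP => i j.
  by rewrite (ord1 j) mxE; move: i; apply: ord2P.
case/orP => /eqP v0.
- apply: (v_neq0 v0); transitivity (- (0 * v 0 0 + -1 * v 1 0)); first by ring.
  by rewrite Bv0 v0 mulr0 oppr0.
- apply: (v_neq0 _ v0); transitivity (1 * v 0 0 + 0 * v 1 0); first by ring.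
  by rewrite Bv1 v0 mulr0.
Qed.

Lemma trA0_line_irr_char : contains_irr_char trA0_line.
Proof.
exists (trA0_rep 0).1, (trA0_rep 0).2; split.
- exact: trA0_rep_klein.
- exact: trA0_rep0_irreducible.
- by rewrite trA0_rep_char; apply/trA0_lineE.
Qed.

Lemma trB_line_no_irr_char e : e * e = 1 -> ~ contains_irr_char (trB_line e).
Proof.
move=> e2 [A [B [/klein_repP[_ detB BAB] irrAB]]].
rewrite char_ptE => /trB_lineE[trB _].
exact: irrAB (klein_common_eigenvector detB BAB trB e2).
Qed.

Lemma trA0_line_not_sub_trB e : e != 0 -> ~ csubset trA0_line (trB_line e).
Proof.
move=> e_neq0 /(_ (pt3 0 0 0)) /(_ (proj2 (trA0_lineE 0 0 0) (conj erefl erefl))).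
by case/trB_lineE => /esym/eqP; rewrite mulf_eq0 (negbTE two_neq0) (negbTE e_neq0).
Qed.

Lemma trB_line_not_sub_trA0 e : ~ csubset (trB_line e) trA0_line.
Proof.
move=> /(_ (pt3 1 (2 * e) e)) /(_ (proj2 (trB_lineE e 1 _ _) (conj erefl (esym (mulr1 e))))).
by case/trA0_lineE => /eqP; rewrite oner_eq0.
Qed.

Lemma trB_line_subset_eq e e' : csubset (trB_line e) (trB_line e') -> e = e'.
Proof.
move=> /(_ (pt3 0 (2 * e) 0)) /(_ (proj2 (trB_lineE e 0 _ _) (conj erefl (esym (mulr0 e))))).
by case/trB_lineE => /(mulfI two_neq0).
Qed.

Definition XK_line (i : 'I_3) : cset :=
  match val i with 0 => trA0_line | 1 => trB_line 1 | _ => trB_line (-1) end.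

Lemma XK_line_irr i : zirreducible (XK_line i).
Proof.
elim/ord3P: i => /=.
- by apply: (@zirreducible_line _ _ 1); apply: oner_neq0.
- by apply: (@zirreducible_line _ _ 0); apply: oner_neq0.
- by apply: (@zirreducible_line _ _ 0); apply: oner_neq0.
Qed.

Lemma XK_lines x : XK x <-> exists i, XK_line i x.
Proof.
split=> [[A [B [kAB xAB]]] | [i Lx]].
- have -> : x = char_pt A B by apply: functional_extensionality.
  by case: (klein_char_lines kAB) => Lx; [exists 0 | exists 1 | exists 2].
- move: Lx; elim/ord3P: i => /=; first exact: trA0_line_sub_XK.
  + by apply: trB_line_sub_XK; rewrite mulr1.
  + by apply: trB_line_sub_XK; rewrite mulrNN mulr1.
Qed.

Lemma XK_line_incomparable i j : csubset (XK_line i) (XK_line j) -> i = j.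
Proof.
have m1_neq1 : (-1 : C) != 1 by rewrite -subr_eq0 -opprD oppr_eq0 -mulr2n pnatr_eq0.
elim/ord3P: i; elim/ord3P: j => //= ij; exfalso.
- exact: trA0_line_not_sub_trB (oner_neq0 _) ij.
- by apply: trA0_line_not_sub_trB ij; rewrite oppr_eq0 oner_eq0.
- exact: trB_line_not_sub_trA0 ij.
- by move: (trB_line_subset_eq ij); apply/eqP; rewrite eq_sym.
- exact: trB_line_not_sub_trA0 ij.
- by move: (trB_line_subset_eq ij); apply/eqP.
Qed.

Theorem corollary4p2 :
  exists Z1 Z2 Z3 : cset,
    [/\ irr_component XK Z1, irr_component XK Z2 & irr_component XK Z3]
    /\ [/\ ~ csame Z1 Z2, ~ csame Z1 Z3 & ~ csame Z2 Z3]
    /\ (forall Z, irr_component XK Z ->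
          [\/ csame Z Z1, csame Z Z2 | csame Z Z3])
    /\ [/\ contains_irr_char Z1, ~ contains_irr_char Z2,
           ~ contains_irr_char Z3 & zdim_eq Z1 1].
Proof.
have component := irr_component_cover XK_line_irr XK_lines XK_line_incomparable.
have distinct i j : i != j -> ~ csame (XK_line i) (XK_line j).
  by move=> /eqP ij [/XK_line_incomparable].
exists (XK_line 0), (XK_line 1), (XK_line 2); split; [|split; [|split]].
- by split; apply: component.
- by split; apply: distinct.
- move=> Z ZX; case: (irr_component_coverP XK_line_irr XK_lines ZX) => i.
  by elim/ord3P: i => Zi; [constructor 1 | constructor 2 | constructor 3].
- split; first exact: trA0_line_irr_char.
  + by apply: trB_line_no_irr_char; rewrite mulr1.
  + by apply: trB_line_no_irr_char; rewrite mulrNN mulr1.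
  + exact: (@zdim_line _ _ 1 (oner_neq0 _)).
Qed.
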